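(* Let $\{\nu_k\}_{k\ge0}$ be a sparse sequence of stopping times and define $S_m:=\bigcup_{k\ge0}\{\nu_k=m\}$ for $m\ge0$. Then $\{S_m\}_{m\ge0}$ is sparse.
   Context: $(\Omega,\mathcal{F},\mu)$ is a probability space with filtration $\{\mathcal{F}_k\}_{k\ge0}$, $\mathsf{E}_k=\mathsf{E}[\cdot|\mathcal{F}_k]$. An increasing sequence of stopping times $\{\nu_k\}_{k\ge0}$ is called sparse if, with $E_k=\{\nu_k<\infty\}$, for every $k$ and every $A\subseteq E_k$ with $A\in\mathcal{F}_{\nu_k}$ we have $\mu(A\cap E_{k+1})\le\frac12\mu(A)$. An adapted sequence of sets $\{S_k\}_{k\ge0}$ ($S_k\in\mathcal{F}_k$) is $\eta$-sparse if for every $k\ge0$ and every $\mathcal{F}_k$-measurable $A\subseteq S_k$, $\mu(A\setminus\bigcup_{m\ge k+1}S_m)\ge\eta\mu(A)$; ''sparse'' means $\frac12$-sparse. *)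

From mathcomp Require Import all_boot all_order all_algebra.
From mathcomp Require Import all_classical all_reals all_analysis.
Set Implicit Arguments. Unset Strict Implicit. Unset Printing Implicit Defensive.
Import Order.TTheory GRing.Theory Num.Theory.
Local Open Scope classical_set_scope.
Local Open Scope ring_scope.

(* Discrete time with infinity: [None] stands for +oo. *)
Definition leoi (a b : option nat) : bool :=
  match a, b with
  | _, None => true
  | None, Some _ => false
  | Some x, Some y => (x <= y)%N
  end.

Section defs.
Context {d : measure_display} {T : measurableType d}.

Definition filtration (F : nat -> set (set T)) : Prop :=
  [/\ forall n, sigma_algebra setT (F n),
      forall n, F n `<=` measurable &
      forall n, F n `<=` F n.+1].

Definition stopping_time (F : nat -> set (set T)) (tau : T -> option nat) :=
  forall n : nat, F n [set x | leoi (tau x) (Some n)].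

Definition stopped_sigma (F : nat -> set (set T)) (tau : T -> option nat)
  : set (set T) :=
  [set A | measurable A /\
     forall n : nat, F n (A `&` [set x | leoi (tau x) (Some n)])].

Context {R : realType}.

Definition sparse_stopping_times (P : probability T R)
  (F : nat -> set (set T)) (nu : nat -> T -> option nat) : Prop :=
  [/\ forall k, stopping_time F (nu k),
      forall k x, leoi (nu k x) (nu k.+1 x) &
      forall k (A : set T),
        A `<=` [set x | nu k x != None] -> stopped_sigma F (nu k) A ->
        (P (A `&` [set x | nu k.+1 x != None]) <= (2^-1)%:E * P A)%E].

Definition eta_sparse_sets (P : probability T R) (F : nat -> set (set T))
  (eta : R) (S : nat -> set T) : Prop :=
  (forall k, F k (S k)) /\
  forall k (A : set T), F k A -> A `<=` S k ->
    (eta%:E * P A <= P (A `\` \bigcup_(m in [set m | (k.+1 <= m)%N]) S m))%E.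

End defs.

From mathcomp Require Import all_boot all_order all_algebra.
From mathcomp Require Import all_classical all_reals all_analysis.
Local Open Scope classical_set_scope.
Local Open Scope ring_scope.
Import Order.TTheory GRing.Theory Num.Theory.

(* Split A ⊆ S_m (A ∈ F_m) according to the first index k with nu_k = m.
   The piece B_k is F_{nu_k}-measurable and contained in {nu_k < oo}, and any of
   its points that lies in some later S_m' (m' > m) has nu_{k+1} finite, since
   nu_k' = m' > m = nu_k forces k' > k.  Sparseness of {nu_k} thus gives
   P(B_k ∩ later) <= P(B_k)/2, and summing over the disjoint pieces yields
   P(A ∩ later) <= P(A)/2. *)

Section sigma_algebra_closure.
Variables (T : Type) (G : set (set T)).
Hypothesis sG : sigma_algebra setT G.

Lemma sigma_algebra_setT : G setT.
Proof. by have [] := (sigma_algebraP (fun _ _ => @subsetT _ _)).1 sG. Qed.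

Lemma sigma_algebra_setI : setI_closed G.
Proof. by have [] := (sigma_algebraP (fun _ _ => @subsetT _ _)).1 sG. Qed.

Lemma sigma_algebra_setC A : G A -> G (~` A).
Proof. by case: sG => _ GD _ /GD; rewrite setTD. Qed.

Lemma sigma_algebra_setD A B : G A -> G B -> G (A `\` B).
Proof.
by move=> GA /sigma_algebra_setC GB; rewrite setDE; exact: sigma_algebra_setI.
Qed.

Lemma sigma_algebra_seqDU (F : (set T)^nat) :
  (forall n, G (F n)) -> forall n, G (seqDU F n).
Proof.
move=> GF n; rewrite /seqDU setDE; apply: sigma_algebra_setI => //.
rewrite -bigcup_mkord setC_bigcup bigcap_mkord.
apply: big_ind => //; first exact: sigma_algebra_setT.
  exact: sigma_algebra_setI.
by move=> i _; exact/sigma_algebra_setC.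
Qed.

End sigma_algebra_closure.

Lemma leoi_refl : reflexive leoi. Proof. by case=> //=. Qed.

Lemma leoi_trans : transitive leoi.
Proof. by case=> [b|] [a|] [c|] //=; apply: leq_trans. Qed.

Lemma leoi_homo (u : nat -> option nat) :
  (forall k, leoi (u k) (u k.+1)) -> {homo u : i j / (i <= j)%N >-> leoi i j}.
Proof.
by apply: homo_leq => [x|y x z]; [exact: leoi_refl | exact: leoi_trans].
Qed.

Lemma leoi_next_finite (u : nat -> option nat) {k k' m m'} :
  (forall k, leoi (u k) (u k.+1)) -> u k = Some m -> u k' = Some m' ->
  (m < m')%N -> u k.+1 != None.
Proof.
move=> /leoi_homo u_homo uk uk' mm'.
have kk' : (k < k')%N.
  by rewrite ltnNge; apply/negP => /u_homo; rewrite uk uk' /= leqNgt mm'.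
by have := u_homo _ _ kk'; rewrite uk'; case: (u k.+1).
Qed.

Section filtration.
Context {d : measure_display} {T : measurableType d} {F : nat -> set (set T)}.
Hypothesis hF : filtration F.

Lemma filtration_sigma_algebra n : sigma_algebra setT (F n).
Proof. by case: hF. Qed.

Lemma filtration_measurable n A : F n A -> measurable A.
Proof. by case: hF => _ + _; apply. Qed.

Lemma filtration_sub m n : (m <= n)%N -> F m `<=` F n.
Proof.
case: hF => _ _ FS; apply: (homo_leq (r := fun A B => A `<=` B)) => //.
- by move=> A; exact: subset_refl.
- by move=> B A C; exact: subset_trans.
Qed.

Lemma stopping_time_level tau m :
  stopping_time F tau -> F m [set x | tau x = Some m].
Proof.
move=> st; case: m => [|m].
  suff -> : [set x | tau x = Some 0%N] = [set x | leoi (tau x) (Some 0%N)].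
    exact: st.
  by apply/seteqP; split => x /=; case: (tau x) => [[|a]|].
suff -> : [set x | tau x = Some m.+1] =
    [set x | leoi (tau x) (Some m.+1)] `\` [set x | leoi (tau x) (Some m)].
  apply: sigma_algebra_setD; [exact: filtration_sigma_algebra | exact: st |].
  exact: filtration_sub (leqnSn m) _ (st m).
apply/seteqP; split => x /=; case: (tau x) => [a|] //=; last by case.
  by case=> ->; rewrite ltnn.
move=> [a_le /negP]; rewrite -ltnNge => m_lt.
by congr Some; apply/eqP; rewrite eqn_leq a_le.
Qed.

Lemma stopping_time_finite_measurable tau :
  stopping_time F tau -> measurable [set x | tau x != None].
Proof.
move=> st; suff -> : [set x | tau x != None] =
    \bigcup_n [set x | leoi (tau x) (Some n)].
  by apply: bigcup_measurable => n _; exact: filtration_measurable (st n).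
apply/seteqP; split => x /=; last by case=> n _ /=; case: (tau x).
by case E: (tau x) => [a|] // _; exists a => //=; rewrite E /=.
Qed.

Lemma stopped_sigma_level tau m B :
  F m B -> B `<=` [set x | tau x = Some m] -> stopped_sigma F tau B.
Proof.
move=> FB Btau; split => [|n]; first exact: filtration_measurable FB.
have [mn|nm] := leqP m n.
  suff -> : B `&` [set x | leoi (tau x) (Some n)] = B.
    exact: filtration_sub FB.
  by apply/setIidl => x /Btau /= ->.
suff -> : B `&` [set x | leoi (tau x) (Some n)] = set0.
  by case: (filtration_sigma_algebra n).
by apply/seteqP; split => // x [/Btau /= ->] /=; rewrite leqNgt nm.
Qed.

Lemma stopping_times_level (nu : nat -> T -> option nat) m :
  (forall k, stopping_time F (nu k)) ->
  F m (\bigcup_k [set x | nu k x = Some m]).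
Proof.
move=> st; have [_ _ FU] := filtration_sigma_algebra m.
by apply: FU => k; exact: stopping_time_level.
Qed.

End filtration.

Section measure_partition.
Context {d : measure_display} {T : measurableType d} {R : realType}.

Lemma measure_partition_setI_le (mu : {measure set T -> \bar R})
    (B : (set T)^nat) (U : set T) (c : R) :
  (forall k, measurable (B k)) -> measurable U -> trivIset setT B -> 0 <= c ->
  (forall k, (mu (B k `&` U) <= c%:E * mu (B k))%E) ->
  (mu (\bigcup_k B k `&` U) <= c%:E * mu (\bigcup_k B k))%E.
Proof.
move=> mB mU tB c0 BU_le; rewrite setI_bigcupl !measure_bigcup //; last 2 first.
- by move=> k _; exact: measurableI.
- exact: trivIset_setIr.
rewrite -nneseriesZl //; apply: lee_nneseries => // k _; exact: BU_le.
Qed.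

Lemma finite_measure_setD_ge (mu : {finite_measure set T -> \bar R})
    (A U : set T) (c : R) :
  measurable A -> measurable U -> (mu (A `&` U) <= c%:E * mu A)%E ->
  ((1 - c)%:E * mu A <= mu (A `\` U))%E.
Proof.
move=> mA mU AU_le.
have finA := fin_num_measure mu A mA.
rewrite measureD //; last by rewrite ltey_eq finA.
by rewrite EFinB muleBl // mul1e; apply: leeB.
Qed.

End measure_partition.

Theorem lemma1p3 (d : measure_display) (T : measurableType d) (R : realType)
  (P : probability T R) (F : nat -> set (set T))
  (nu : nat -> T -> option nat) :
  filtration F ->
  sparse_stopping_times P F nu ->
  eta_sparse_sets P F (2^-1)
    (fun m => \bigcup_k [set x | nu k x = Some m]).
Proof.
move=> hF [st nu_mono sp].
split=> [m|m A FA AS]; first exact: stopping_times_level.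
set U := \bigcup_(j in _) _.
pose B := fun k => A `&` seqDU (fun k => [set x | nu k x = Some m]) k.
have FB k : F m (B k).
  apply: sigma_algebra_setI (filtration_sigma_algebra hF m) _ _ FA _.
  by apply: sigma_algebra_seqDU (filtration_sigma_algebra hF m) _ _ _ => j;
    exact: stopping_time_level.
have mB k : measurable (B k) := filtration_measurable hF _ _ (FB k).
have B_level k : B k `<=` [set x | nu k x = Some m] by move=> x [_ []].
have A_eq : A = \bigcup_k B k.
  by rewrite -setI_bigcupr -seqDU_bigcup_eq; apply/esym/setIidl.
have mU : measurable U.
  apply: bigcup_measurable => j _.
  exact: filtration_measurable hF j _ (stopping_times_level hF nu j st).
have -> : 2^-1 = 1 - 2^-1 :> R by rewrite {2}(splitr 1) div1r addrK.
apply: finite_measure_setD_ge => //.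
  exact: filtration_measurable hF _ _ FA.
rewrite A_eq; apply: measure_partition_setI_le => // [|k].
  exact/trivIset_setIl/trivIset_seqDU.
have B_finite : B k `<=` [set x | nu k x != None] by move=> x /B_level /= ->.
have FnuB := stopped_sigma_level hF _ _ _ (FB k) (B_level k).
apply: le_trans (sp k _ B_finite FnuB).
apply: le_measure; rewrite ?inE; first exact: measurableI (mB k) mU.
  exact: measurableI (mB k) (stopping_time_finite_measurable hF _ (st k.+1)).
move=> x [Bx [j /= mj [k' _ nuk']]]; split => //.
exact: leoi_next_finite (nu_mono^~ x) (B_level k x Bx) nuk' mj.
Qed.
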